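(* Let $X$ be a strongly connected finite digraph with $\delta(X)=0$. Then $$\mathcal{BF}_X(\mathcal{L}(X))\subseteq\mathcal{BF}_X(\mathbb{Z}V_X)\subseteq\mathcal{L}(X),$$ and $\mathrm{rank}_{\mathbb{Z}}\mathcal{BF}_X(\mathcal{L}(X))=\mathrm{rank}_{\mathbb{Z}}\mathcal{BF}_X(\mathbb{Z}V_X)=\mathrm{rank}_{\mathbb{Z}}\mathcal{L}(X)$.
   Context: Digraph $X=(V_X,E_X)$ with incidence $e\mapsto(o(e),t(e))$; strongly connected means a directed path exists between any two distinct vertices. For finite $X$: $\mathcal{A}_X(v)=\sum_{o(e)=v}t(e)$ on $\mathbb{Z}V_X$, $\mathcal{BF}_X=\mathcal{I}-\mathcal{A}_X$, $\mathrm{BF}(X)=\mathrm{coker}\,\mathcal{BF}_X$, $g_X(u)=\det(\mathcal{I}-\mathcal{A}_Xu)$, $r_X=\mathrm{ord}_{u=1}g_X$, $\delta(X)=r_X-\mathrm{rank}_{\mathbb{Z}}\mathrm{BF}(X)$. Writing $\mathcal{BF}_{\mathbb{Q}}$ for the extension to $\mathbb{Q}V_X$, one has (when $\delta(X)=0$) the decomposition $\mathbb{Q}V_X=\ker\mathcal{BF}_{\mathbb{Q}}\oplus W$ with $W=\mathrm{Im}\,\mathcal{BF}_{\mathbb{Q}}$, and $\mathcal{L}(X)=\mathbb{Z}V_X\cap W$ (with $\mathbb{Z}V_X\subseteq\mathbb{Q}V_X$). *)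

From HB Require Import structures.
From mathcomp Require Import all_boot all_order all_algebra.
From mathcomp Require Import boolp.
Set Implicit Arguments. Unset Strict Implicit. Unset Printing Implicit Defensive.
Import Order.TTheory GRing.Theory Num.Theory.
Local Open Scope ring_scope.

(* A finite digraph with vertex set 'I_n and edge set E, incidence e |-> (o e, t e). *)

Definition adj (n : nat) (E : finType) (o t : E -> 'I_n) : rel 'I_n :=
  fun u w => [exists e, (o e == u) && (t e == w)].

Definition strongly_connected (n : nat) (E : finType) (o t : E -> 'I_n) : Prop :=
  forall u v : 'I_n, u != v -> connect (adj o t) u v.

(* Matrix of A_X acting on row vectors x (x *m A): A v w = #{e | o e = v, t e = w},
   so that the basis vector v is sent to sum_{o e = v} t e. *)
Definition adjmx (n : nat) (E : finType) (o t : E -> 'I_n) : 'M[int]_n :=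
  \matrix_(v, w) (#|[pred e | (o e == v) && (t e == w)]|)%:Z.

Definition BFmx (n : nat) (E : finType) (o t : E -> 'I_n) : 'M[int]_n :=
  1%:M - adjmx o t.

Definition gX (n : nat) (E : finType) (o t : E -> 'I_n) : {poly int} :=
  \det (\matrix_(i, j) ((i == j)%:R%:P - ((adjmx o t i j)%:P * 'X)) : 'M[{poly int}]_n).

Definition rX (n : nat) (E : finType) (o t : E -> 'I_n) : nat :=
  mup (1 : rat) (map_poly (intr : int -> rat) (gX o t)).

(* rank over Z of the cokernel ZV / (ZV *m B): maximal number of elements of ZV
   whose classes in the quotient are Z-linearly independent (this is always <= n). *)
Definition coker_indep (n r : nat) (B : 'M[int]_n) (M : 'M[int]_(r, n)) : Prop :=
  forall c : 'rV[int]_r, (exists y : 'rV[int]_n, c *m M = y *m B) -> c = 0.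

Definition rank_coker (n : nat) (B : 'M[int]_n) : nat :=
  \max_(r < n.+1 | `[< exists M : 'M[int]_(r, n), coker_indep B M >]) r.

Definition indep_in (n r : nat) (S : 'rV[int]_n -> Prop) (M : 'M[int]_(r, n)) : Prop :=
  (forall i, S (row i M)) /\ (forall c : 'rV[int]_r, c *m M = 0 -> c = 0).

Definition Zrank (n : nat) (S : 'rV[int]_n -> Prop) : nat :=
  \max_(r < n.+1 | `[< exists M : 'M[int]_(r, n), indep_in S M >]) r.

Definition deltaX (n : nat) (E : finType) (o t : E -> 'I_n) : int :=
  (rX o t)%:Z - (rank_coker (BFmx o t))%:Z.

Definition ZV (n : nat) : 'rV[int]_n -> Prop := fun _ => True.

(* L(X) = ZV ∩ W, W = Im BF_Q (row space over Q of BF) *)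
Definition LX (n : nat) (E : finType) (o t : E -> 'I_n) : 'rV[int]_n -> Prop :=
  fun x => (map_mx (intr : int -> rat) x <= map_mx (intr : int -> rat) (BFmx o t))%MS.

Definition BFimg (n : nat) (E : finType) (o t : E -> 'I_n) (S : 'rV[int]_n -> Prop)
  : 'rV[int]_n -> Prop :=
  fun y => exists2 x, S x & y = x *m BFmx o t.

From HB Require Import structures.
From mathcomp Require Import all_boot all_order all_algebra.
From mathcomp Require Import boolp.
From mathcomp Require Import ring zify.

(* Write B = I - A for the Bowen-Franks matrix over Q, k = n - rank B for its
   corank, and note g_X(u) = det((1 - u) I + u B).  If rank B^2 < rank B, then in
   a basis starting with ker B the matrix B is block lower triangular with zero
   upper rows and a singular lower-right corner D, so
   g_X(u) = (1 - u)^k det((1 - u) I + u D) vanishes to order > k at u = 1.  But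
   the Z-rank of BF(X) is at most k, so delta(X) = 0 forbids this: rank B^2 = rank B.
   Then the rows of B^2, which lie in BF(L(X)), span the whole Q-row space of B,
   which contains L(X); all three lattices therefore have Z-rank rank_Q B. *)

Set Implicit Arguments. Unset Strict Implicit. Unset Printing Implicit Defensive.
Import Order.TTheory GRing.Theory Num.Theory.
Local Open Scope ring_scope.

Section Pencil.
Variable F : fieldType.

(* For B = I - A this is I - 'X A, the matrix whose determinant is g_X. *)
Definition pencil n (B : 'M[F]_n) : 'M[{poly F}]_n :=
  (1 - 'X) *: 1%:M + 'X *: map_mx polyC B.

Lemma horner_det_pencil n (B : 'M[F]_n) (x : F) :
  (\det (pencil B)).[x] = \det ((1 - x) *: 1%:M + x *: B).
Proof.
rewrite -horner_evalE -det_map_mx; congr (\det _); apply/matrixP => i j.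
by rewrite !mxE /= horner_evalE !hornerE; case: (i == j); rewrite ?hornerE.
Qed.

Lemma det_pencil_neq0 n (B : 'M[F]_n) : \det (pencil B) != 0.
Proof.
have := horner_det_pencil B 0.
rewrite subr0 scale1r scale0r addr0 det1.
by apply: contra_eq_neq => ->; rewrite horner0 eq_sym oner_eq0.
Qed.

Lemma det_pencil_conj n (P B : 'M[F]_n) : P \in unitmx ->
  \det (pencil (P *m B *m invmx P)) = \det (pencil B).
Proof.
move=> uP.
have -> : pencil (P *m B *m invmx P) =
           map_mx polyC P *m pencil B *m map_mx polyC (invmx P).
  rewrite /pencil mulmxDr mulmxDl -!scalemxAr -!scalemxAl mulmx1 -!map_mxM mulmxV //.
  by rewrite map_mx1.
by rewrite !det_mulmx mulrC mulrA -det_mulmx -map_mxM mulVmx // map_mx1 det1 mul1r.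
Qed.

Lemma det_pencil_lblock k m (C : 'M[F]_(m, k)) (D : 'M_m) :
  \det (pencil (block_mx 0 0 C D)) = (1 - 'X) ^+ k * \det (pencil D).
Proof.
rewrite /pencil map_block_mx !map_mx0 (scalar_mx_block k m) !scale_block_mx.
by rewrite add_block_mx !scaler0 !addr0 det_lblock scalemx1 det_scalar.
Qed.

Lemma mxrank_drsubmx m1 m2 n1 n2 (X : 'M[F]_(m1 + m2, n1 + n2)) :
  (\rank (drsubmx X) <= \rank X)%N.
Proof.
have -> : drsubmx X = row_mx 0 1%:M *m X *m col_mx 0 1%:M.
  rewrite -{2}(submxK X) mul_row_col mul0mx add0r mul1mx.
  by rewrite mul_row_col mulmx0 add0r mulmx1.
by rewrite (leq_trans (mxrankM_maxl _ _)) // mxrankM_maxr.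
Qed.

Lemma mxrank_conj n (P X : 'M[F]_n) : P \in unitmx ->
  \rank (P *m X *m invmx P) = \rank X.
Proof.
move=> uP; rewrite mxrankMfree ?row_free_unit ?unitmx_inv //.
by apply/eqP; rewrite eqn_leq mxrankM_maxr -{1}[X](mulKmx uP) mxrankM_maxr.
Qed.

Lemma dvdp_pencil_kernel_basis k m (B P : 'M[F]_(k + m)) :
  P \in unitmx -> usubmx P *m B = 0 -> \rank B = m -> (\rank (B *m B) < m)%N ->
  ('X - 1) ^+ k.+1 %| \det (pencil B).
Proof.
move=> uP kerP rkB rkBB; set C := P *m B *m invmx P.
have uC0 : usubmx C = 0 by rewrite /C -!mul_usub_mx kerP !mul0mx.
have defC : C = block_mx 0 0 (dlsubmx C) (drsubmx C).
  by rewrite -{1}(submxK C) /ulsubmx /ursubmx uC0 -row_mx0 row_mxKl row_mxKr.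
(* If D := drsubmx C were invertible, then
   rank (B *m B) = rank (C *m C) >= rank (D *m D) = m. *)
have singD : \det (drsubmx C) = 0.
  apply/eqP; rewrite -[_ == 0]negbK -unitfE -unitmxE; apply/negP => uD.
  have CC : C *m C = P *m (B *m B) *m invmx P.
    by rewrite /C !mulmxA -[_ *m invmx P *m P]mulmxA mulVmx // mulmx1.
  have dCC : drsubmx (C *m C) = drsubmx C *m drsubmx C.
    by rewrite {1 2}defC mulmx_block block_mxKdr !mulmx0 add0r.
  have := mxrank_drsubmx (C *m C).
  by rewrite dCC CC mxrank_conj // mxrank_unit ?unitmx_mul ?uD // leqNgt rkBB.
rewrite -(det_pencil_conj B uP) -/C defC det_pencil_lblock.
have root1 : root (\det (pencil (drsubmx C))) 1.
  by rewrite /root horner_det_pencil subrr scale0r add0r scale1r singD.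
rewrite exprS mulrC dvdp_mul //; last by rewrite -polyC1 dvdp_XsubCl.
by rewrite -[1 - 'X]opprB exprNn dvdp_mull.
Qed.

Lemma dvdp_pencil_rank n (B : 'M[F]_n) : (\rank (B *m B) < \rank B)%N ->
  ('X - 1) ^+ (n - \rank B).+1 %| \det (pencil B).
Proof.
move=> rkBB; set K := kermx B.
have rkB_le : (\rank B <= n)%N := rank_leq_row B.
have [k [m [P1 [P2 [defn defk eqP1 eqP2]]]]] :
    exists k m (P1 : 'M[F]_(k, n)) (P2 : 'M_(m, n)),
    [/\ n = (k + m)%N, k = (n - \rank B)%N, (P1 :=: K)%MS & (P2 :=: K^C%MS)%MS].
  exists _, _, (row_base K), (row_base K^C%MS); split; try exact: eq_row_base.
    by rewrite mxrank_compl mxrank_ker subnKC // leq_subr.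
  by rewrite mxrank_ker.
rewrite -defk; subst n.
apply: (@dvdp_pencil_kernel_basis _ _ _ (col_mx P1 P2)); [| | lia | lia].
- rewrite -row_full_unit /row_full -addsmxE (adds_eqmx eqP1 eqP2).
  exact: addsmx_compl_full.
- by rewrite col_mxKu; apply/sub_kermxP; rewrite eqP1.
Qed.

End Pencil.

Local Notation ratmx := (map_mx (intr : int -> rat)).

Lemma ratmx_inj p q : injective (ratmx : 'M[int]_(p, q) -> 'M[rat]_(p, q)).
Proof.
move=> A B /matrixP eqAB; apply/matrixP => i j.
by have := eqAB i j; rewrite !mxE => /intr_inj.
Qed.

Lemma ratmx_common_denom p q (V : 'M[rat]_(p, q)) :
  exists2 D : int, D != 0 & exists W : 'M[int]_(p, q), ratmx W = D%:~R *: V.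
Proof.
pose Dbut (ij : 'I_p * 'I_q) := \prod_(kl | kl != ij) denq (V kl.1 kl.2).
exists (\prod_(kl : 'I_p * 'I_q) denq (V kl.1 kl.2)).
  by apply/prodf_neq0 => kl _; exact: denq_neq0.
exists (\matrix_(i, j) (numq (V i j) * Dbut (i, j))).
apply/matrixP => i j; rewrite !mxE (bigD1 (i, j)) //= intrM numqE intrM.
by rewrite [RHS]mulrC mulrA.
Qed.

Lemma row_free_ratmxP r n (M : 'M[int]_(r, n)) :
  (forall c : 'rV[int]_r, c *m M = 0 -> c = 0) <-> row_free (ratmx M).
Proof.
split=> [indepM | freeM c cM0]; last first.
  by apply: ratmx_inj; apply: (row_free_inj freeM); rewrite -map_mxM cM0 !map_mx0 mul0mx.
apply/inj_row_free => v vM0.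
have [D D0 [W defW]] := ratmx_common_denom v.
have W0 : W = 0.
  by apply/indepM/ratmx_inj; rewrite map_mxM defW -scalemxAl vM0 scaler0 map_mx0.
apply/eqP; move: defW; rewrite W0 map_mx0 => /esym/eqP.
by rewrite scaler_eq0 intr_eq0 (negPf D0).
Qed.

Lemma rank_coker_le n (B : 'M[int]_n) : (rank_coker B <= n - \rank (ratmx B))%N.
Proof.
apply/bigmax_leqP => r /asboolP [M indepM].
set N := ratmx M *m cokermx (ratmx B).
have freeN : row_free N.
  apply/inj_row_free => c cN0.
  have [d defd] : exists d, c *m ratmx M = d *m ratmx B.
    by apply/submxP; rewrite submxE -mulmxA cN0.
  have [Dc Dc0 [Wc defWc]] := ratmx_common_denom c.
  have [Dd Dd0 [Wd defWd]] := ratmx_common_denom d.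
  have : Dd *: Wc = 0.
    apply: indepM; exists (Dc *: Wd); apply: ratmx_inj.
    by rewrite !map_mxM !map_mxZ /= defWc defWd -!scalemxAl defd !scalerA mulrC.
  move/(congr1 ratmx); rewrite map_mxZ /= defWc scalerA map_mx0 => /eqP.
  by rewrite scaler_eq0 mulf_eq0 !intr_eq0 (negPf Dc0) (negPf Dd0) => /eqP.
by rewrite -(eqP freeN) -(mxrank_coker (ratmx B)) mxrankM_maxr.
Qed.

Lemma Zrank_le_rank n m (S : 'rV[int]_n -> Prop) (A : 'M[rat]_(m, n)) :
  (forall x, S x -> (ratmx x <= A)%MS) -> (Zrank S <= \rank A)%N.
Proof.
move=> SA; apply/bigmax_leqP => r /asboolP [M [SM /row_free_ratmxP freeM]].
rewrite -(eqP freeM); apply: mxrankS; apply/row_subP => i.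
by rewrite -map_row SA.
Qed.

Lemma rank_le_Zrank r n (S : 'rV[int]_n -> Prop) (M : 'M[int]_(r, n)) :
  (forall i, S (row i M)) -> (\rank (ratmx M) <= Zrank S)%N.
Proof.
move=> SM; set f := maxrankfun (ratmx M).
have freeMf : row_free (ratmx (rowsub f M)) by rewrite map_mxsub maxrowsub_free.
have rk_lt : (\rank (ratmx M) < n.+1)%N by rewrite ltnS rank_leq_col.
apply: (@leq_bigmax_cond _ _ _ (Ordinal rk_lt)); apply/asboolP.
by exists (rowsub f M); split=> [i|]; [rewrite row_rowsub | apply/row_free_ratmxP].
Qed.

Lemma Zrank_between n (B : 'M[int]_n) (S : 'rV[int]_n -> Prop) :
  \rank (ratmx (B *m B)) = \rank (ratmx B) ->
  (forall x, S (x *m B *m B)) -> (forall x, S x -> (ratmx x <= ratmx B)%MS) ->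
  Zrank S = \rank (ratmx B).
Proof.
move=> rkBB SBB SB; apply/eqP; rewrite eqn_leq Zrank_le_rank //= -rkBB.
apply: rank_le_Zrank => i.
by have -> : row i (B *m B) = row i 1%:M *m B *m B by rewrite -!row_mul mul1mx.
Qed.

Section Digraph.
Variables (n : nat) (E : finType) (o t : E -> 'I_n).
Local Notation BQ := (ratmx (BFmx o t)).

Lemma gX_pencil : map_poly (intr : int -> rat) (gX o t) = \det (pencil BQ).
Proof.
rewrite /gX -det_map_mx; congr (\det _); apply/matrixP => i j.
rewrite !mxE rmorphB /= map_polyC rmorphM /= map_polyX map_polyC /= rmorphB /=.
by case: (i == j); rewrite polyCB ?rmorph1 ?rmorph0 ?polyC1 ?polyC0; ring.
Qed.

Lemma rX_gt_corank : (\rank (BQ *m BQ) < \rank BQ)%N -> (n - \rank BQ < rX o t)%N.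
Proof.
move=> rkBB; rewrite /rX gX_pencil mup_geq ?det_pencil_neq0 // polyC1.
exact: dvdp_pencil_rank.
Qed.

Lemma rank_sqr_BF : deltaX o t = 0 ->
  \rank (ratmx (BFmx o t *m BFmx o t)) = \rank BQ.
Proof.
move=> /eqP; rewrite subr_eq0 eqz_nat => /eqP rX_coker.
apply/eqP; rewrite map_mxM eqn_leq mxrankM_maxr leqNgt; apply/negP => /rX_gt_corank.
by rewrite rX_coker ltnNge rank_coker_le.
Qed.

End Digraph.

Theorem proposition2p9 (n : nat) (E : finType) (o t : E -> 'I_n) :
  strongly_connected o t ->
  deltaX o t = 0 ->
  [/\ (forall y, BFimg o t (LX o t) y -> BFimg o t (@ZV n) y),
      (forall y, BFimg o t (@ZV n) y -> LX o t y),
      Zrank (BFimg o t (LX o t)) = Zrank (BFimg o t (@ZV n))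
    & Zrank (BFimg o t (@ZV n)) = Zrank (LX o t)].
Proof.
move=> _ /rank_sqr_BF rkBB; set B := BFmx o t.
have imgL_imgZ y : BFimg o t (LX o t) y -> BFimg o t (@ZV n) y.
  by case=> x _ ->; exists x.
have imgZ_L y : BFimg o t (@ZV n) y -> LX o t y.
  by case=> x _ ->; rewrite /LX map_mxM submxMl.
have rk_imgL : Zrank (BFimg o t (LX o t)) = \rank (ratmx B).
  apply: (Zrank_between rkBB) => [x | x /imgL_imgZ /imgZ_L //].
  by exists (x *m B) => //; rewrite /LX map_mxM submxMl.
have rk_imgZ : Zrank (BFimg o t (@ZV n)) = \rank (ratmx B).
  by apply: (Zrank_between rkBB) => [x | x /imgZ_L //]; exists (x *m B).
have rk_L : Zrank (LX o t) = \rank (ratmx B).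
  by apply: (Zrank_between rkBB) => // x; rewrite /LX !map_mxM submxMl.
by split; rewrite ?rk_imgL ?rk_imgZ ?rk_L.
Qed.
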